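(* Let $(T,b)$ be a branched ideal triangulation of $(S,V)$ and let $e$ be an edge of $T$ which is ambiguous and untrapped in $(T,b)$. Let $b'$ be the branching obtained from $b$ by reversing the orientation of $e$. Then $(T,b)$ and $(T,b')$ are connected by a sequence of two $b$-flips.
   Context: $S$ is a compact closed connected surface and $V\subset S$ is a finite set of marked points with $\chi(S)-|V|<0$. An ideal triangulation $T$ of $(S,V)$ is a possibly loose triangulation of $S$ with vertex set $V$, obtained by gluing abstract triangles along abstract edges in pairs. A branching $b$ is an orientation of all edges which on each abstract triangle is induced by a total order of its vertices, edges pointing to the larger endpoint. An edge is trapped if it results from identifying two edges of a single abstract triangle, and untrapped otherwise. An edge $e$ is ambiguous in $(T,b)$ if reversing the orientation of $e$ alone yields a branching. A (naked) flip at an untrapped edge $e$ shared by two abstract triangles forming a quadrilateral replaces $e$ by the other diagonal. A $b$-flip is such a flip together with an orientation of the new diagonal such that, all other edges keeping their orientation, the result is branched. *)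

(* Combinatorial model of ideal triangulations of a closed
   surface obtained by gluing abstract triangles along their edges in pairs. *)
From HB Require Import structures.
From mathcomp Require Import all_boot all_order all_algebra all_fingroup.
Set Implicit Arguments. Unset Strict Implicit. Unset Printing Implicit Defensive.

Section Triangulations.
Variable Tri : finType.

(* Each abstract triangle t has vertices labelled by 'I_3.  A dart (t,a,b)
   is the side of t from vertex a to vertex b (meaningful when a != b). *)
Definition dart := (Tri * 'I_3 * 'I_3)%type.
Definition dtri (x : dart) : Tri := x.1.1.
Definition dsrc (x : dart) : 'I_3 := x.1.2.
Definition dtgt (x : dart) : 'I_3 := x.2.
Definition is_side (x : dart) : bool := dsrc x != dtgt x.
Definition drev (x : dart) : dart := (dtri x, dtgt x, dsrc x).

(* A gluing: (t,a,b) is glued to glue (t,a,b) = (t',a',b'), identifying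
   vertex a of t with a' of t' and b with b'. *)
Definition gluing := dart -> dart.

Definition is_triangulation (g : gluing) : Prop :=
  forall x, is_side x ->
    [/\ is_side (g x), g (g x) = x, g (drev x) = drev (g x),
        g x <> x & g x <> drev x].

(* the four darts representing the edge of T containing the dart d *)
Definition in_edge (g : gluing) (d x : dart) : bool :=
  [|| x == d, x == drev d, x == g d | x == drev (g d)].

Definition trapped (g : gluing) (d : dart) : bool := dtri (g d) == dtri d.

(* An orientation of the edges: o x = true iff the edge is oriented along x.
   A branching: compatible with the gluing, and on every abstract triangle
   induced by a total order of its vertices. *)
Definition is_branching (g : gluing) (o : dart -> bool) : Prop :=
  (forall t : Tri, exists r : 'I_3 -> nat, injective r /\
      forall a b : 'I_3, a != b -> o (t, a, b) = (r a < r b)) /\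
  (forall x, is_side x -> o (g x) = o x).

Definition reverse_at (g : gluing) (d : dart) (o : dart -> bool) : dart -> bool :=
  fun x => if in_edge g d x then ~~ o x else o x.

Definition ambiguous (g : gluing) (o : dart -> bool) (d : dart) : Prop :=
  is_branching g (reverse_at g d o).

Definition third (a b : 'I_3) : 'I_3 := odflt a [pick c | (c != a) && (c != b)].

(* Quadrilateral: t1 = (a1,b1,c1) with e = (a1,b1); t2 = (a2,b2,c2) with
   (a2,b2) = glue (a1,b1).  After the flip t1 keeps the roles
   a1 |-> a, c1 |-> c1, b1 |-> c2 and t2 : a2 |-> c1, b2 |-> b, c2 |-> c2.
   flip_phi relocates the sides of the quadrilateral (old dart -> new dart). *)
Definition flip_phi (g : gluing) (d x : dart) : dart :=
  let t1 := dtri d in let a1 := dsrc d in let b1 := dtgt d in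
  let c1 := third a1 b1 in
  let t2 := dtri (g d) in let a2 := dsrc (g d) in let b2 := dtgt (g d) in
  let c2 := third a2 b2 in
  if x == (t1, c1, b1) then (t2, a2, b2)
  else if x == (t1, b1, c1) then (t2, b2, a2)
  else if x == (t2, c2, a2) then (t1, b1, a1)
  else if x == (t2, a2, c2) then (t1, a1, b1)
  else x.

Definition flip_phiinv (g : gluing) (d x : dart) : dart :=
  let t1 := dtri d in let a1 := dsrc d in let b1 := dtgt d in
  let c1 := third a1 b1 in
  let t2 := dtri (g d) in let a2 := dsrc (g d) in let b2 := dtgt (g d) in
  let c2 := third a2 b2 in
  if x == (t2, a2, b2) then (t1, c1, b1)
  else if x == (t2, b2, a2) then (t1, b1, c1)
  else if x == (t1, b1, a1) then (t2, c2, a2)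
  else if x == (t1, a1, b1) then (t2, a2, c2)
  else x.

(* the new gluing: the new diagonal c1--c2 is (t1,c1,b1) ~ (t2,a2,c2) *)
Definition flip (g : gluing) (d : dart) : gluing := fun x =>
  let t1 := dtri d in let a1 := dsrc d in let b1 := dtgt d in
  let c1 := third a1 b1 in
  let t2 := dtri (g d) in let a2 := dsrc (g d) in let b2 := dtgt (g d) in
  let c2 := third a2 b2 in
  if x == (t1, c1, b1) then (t2, a2, c2)
  else if x == (t1, b1, c1) then (t2, c2, a2)
  else if x == (t2, a2, c2) then (t1, c1, b1)
  else if x == (t2, c2, a2) then (t1, b1, c1)
  else flip_phi g d (g (flip_phiinv g d x)).

Definition br_iso (g : gluing) (o : dart -> bool) (g' : gluing) (o' : dart -> bool)
  : Prop :=
  exists (f : {perm Tri}) (p : Tri -> {perm 'I_3}),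
    let delta (x : dart) : dart :=
      (f (dtri x), p (dtri x) (dsrc x), p (dtri x) (dtgt x)) in
    forall x, is_side x -> g' (delta x) = delta (g x) /\ o' (delta x) = o x.

(* b-flip: a flip at an untrapped edge together with an orientation of the new
   diagonal such that, all other edges keeping their orientation, the result
   is branched (the result being taken up to isomorphism). *)
Definition bflip (g : gluing) (o : dart -> bool) (g' : gluing) (o' : dart -> bool)
  : Prop :=
  exists d : dart, [/\ is_side d, ~~ trapped g d &
    exists o'' : dart -> bool,
      [/\ is_branching (flip g d) o'',
          (forall x, is_side x -> ~~ in_edge g d x -> o'' (flip_phi g d x) = o x)
        & br_iso (flip g d) o'' g' o']].

Definition tri_adj (g : gluing) : rel Tri := fun t t' =>
  [exists a : 'I_3, exists b : 'I_3, (a != b) && (dtri (g (t, a, b)) == t')].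

Definition tri_connected (g : gluing) : Prop :=
  forall t t' : Tri, connect (tri_adj g) t t'.

(* corners (t,a) identified through the gluing give the vertices V *)
Definition corner_rel (g : gluing) : rel (Tri * 'I_3) := fun c c' =>
  [exists b : 'I_3, (b != c.2) &&
     ((dtri (g (c.1, c.2, b)) == c'.1) && (dsrc (g (c.1, c.2, b)) == c'.2))].

Definition n_vertices (g : gluing) : nat := n_comp (corner_rel g) predT.

Definition edge_rel (g : gluing) : rel dart := fun x y =>
  is_side x && ((y == drev x) || (y == g x)).

Definition n_edges (g : gluing) : nat := n_comp (edge_rel g) [pred x | is_side x].

Definition euler_char (g : gluing) : int :=
  (n_vertices g)%:Z - (n_edges g)%:Z + (#|Tri|)%:Z.

End Triangulations.

From HB Require Import structures.
From mathcomp Require Import all_boot all_order all_algebra all_fingroup.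
From mathcomp Require Import zify.

(* Let e be the side (a1,b1) of the triangle t1, glued to the side (a2,b2) of
   the triangle t2 != t1, and let c1, c2 be the opposite vertices.  Since e
   is ambiguous, a1 and b1 are consecutive in the vertex order of t1, i.e. c1
   is a source or a sink of t1; likewise for c2 in t2.  Flip e: the new
   diagonal c1--c2 can then be oriented (from c1 to c2 iff c1 is a source
   of t1 and c2 a sink of t2) so that, all other edges keeping their
   orientation, both new triangles are branched.  Flipping the new diagonal
   back restores the gluing, and e may now receive either orientation; we
   give it the reversed one, which is a branching by ambiguity. *)

Set Implicit Arguments. Unset Strict Implicit. Unset Printing Implicit Defensive.

Lemma ord3_cases (a b c x : 'I_3) :
  a != b -> a != c -> b != c -> [|| x == a, x == b | x == c].
Proof.
by move: a b c x => [[|[|[|?]]] ?] [[|[|[|?]]] ?] [[|[|[|?]]] ?] [[|[|[|?]]] ?].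
Qed.

Lemma ord3_other (a b : 'I_3) : exists c : 'I_3, (c != a) && (c != b).
Proof.
by move: a b => [[|[|[|?]]] ?] [[|[|[|?]]] ?] //;
  solve [ exists (@Ordinal 3 0 isT) => // | exists (@Ordinal 3 1 isT) => //
        | exists (@Ordinal 3 2 isT) => // ].
Qed.

Lemma third_neq (a b : 'I_3) : (third a b != a) && (third a b != b).
Proof.
rewrite /third; case: pickP => [c /andP[-> ->] //|none].
by have [c] := ord3_other a b; rewrite none.
Qed.

Lemma third_uniq (a b c : 'I_3) : a != b -> c != a -> c != b -> third a b = c.
Proof.
move=> ab ca cb; case/andP: (third_neq a b) => ta tb.
have := @ord3_cases a b (third a b) c ab; rewrite eq_sym ta eq_sym tb => /(_ isT isT).
by rewrite (negbTE ca) (negbTE cb) /= => /eqP.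
Qed.

Lemma third_third_l (a b : 'I_3) : a != b -> third (third a b) b = a.
Proof.
by move=> ab; case/andP: (third_neq a b) => ca cb; apply: third_uniq; rewrite // eq_sym.
Qed.

Lemma third_third_r (a b : 'I_3) : a != b -> third a (third a b) = b.
Proof.
by move=> ab; case/andP: (third_neq a b) => ca cb; apply: third_uniq; rewrite // eq_sym.
Qed.

Lemma ord3_ind (a b : 'I_3) (ab : a != b) (P : 'I_3 -> Prop) :
  P a -> P b -> P (third a b) -> forall x, P x.
Proof.
move=> Pa Pb Pc x; case/andP: (third_neq a b) => ca cb.
rewrite eq_sym in ca; rewrite eq_sym in cb.
by case/or3P: (@ord3_cases a b (third a b) x ab ca cb) => /eqP->.
Qed.

Lemma acyclic_tri_order (f : 'I_3 -> 'I_3 -> bool) (a b c : 'I_3) :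
  a != b -> a != c -> b != c ->
  f b a = ~~ f a b -> f c b = ~~ f b c -> f c a = ~~ f a c ->
  ~~ [&& f a b, f b c & ~~ f a c] -> ~~ [&& ~~ f a b, ~~ f b c & f a c] ->
  exists r : 'I_3 -> nat, injective r /\ forall x y, x != y -> f x y = (r x < r y).
Proof.
move=> ab ac bc fba fcb fca no_cycle no_cycle'.
pose r x := if x == a then (~~ f a b : nat) + (~~ f a c : nat)
            else if x == b then (f a b : nat) + (~~ f b c : nat)
            else (f a c : nat) + (f b c : nat).
have [ba ca cb] : [/\ b != a, c != a & c != b] by rewrite !(eq_sym c) eq_sym.
have cases x : [|| x == a, x == b | x == c] by exact: ord3_cases.
exists r; split=> x y.
  case/or3P: (cases x) => /eqP->; case/or3P: (cases y) => /eqP->;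
  rewrite /r ?eqxx ?(negbTE ba) ?(negbTE ca) ?(negbTE cb) //;
  move: no_cycle no_cycle'; case: (f a b); case: (f b c); case: (f a c) => //.
case/or3P: (cases x) => /eqP->; case/or3P: (cases y) => /eqP->;
rewrite /r ?eqxx ?(negbTE ba) ?(negbTE ca) ?(negbTE cb) ?fba ?fcb ?fca //;
move: no_cycle no_cycle'; case: (f a b); case: (f b c); case: (f a c) => //.
Qed.

Lemma orders_differing_on_pair (r r' : 'I_3 -> nat) (a b c : 'I_3) :
  injective r -> injective r' -> a != b -> c != a -> c != b ->
  (r c < r a) = (r' c < r' a) -> (r c < r b) = (r' c < r' b) ->
  (r a < r b) = ~~ (r' a < r' b) -> (r c < r b) = (r c < r a).
Proof.
move=> ri ri' ab ca cb.
have ne (s : 'I_3 -> nat) x y : injective s -> x != y -> s x != s y.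
  by move=> si; apply: contra => /eqP/si->.
move: (ne _ _ _ ri ab) (ne _ _ _ ri' ab) (ne _ _ _ ri ca) (ne _ _ _ ri cb)
      (ne _ _ _ ri' ca) (ne _ _ _ ri' cb).
case: (ltngtP (r c) (r a)); case: (ltngtP (r c) (r b)); case: (ltngtP (r a) (r b));
case: (ltngtP (r' c) (r' a)); case: (ltngtP (r' c) (r' b)); case: (ltngtP (r' a) (r' b));
by move=> *; lia.
Qed.

Section Branchings.
Variable Tri : finType.
Implicit Types (g : gluing Tri) (o : dart Tri -> bool).

Lemma dart_eqE (t t' : Tri) (u v u' v' : 'I_3) :
  ((t, u, v) == (t', u', v') :> dart Tri) = [&& t == t', u == u' & v == v'].
Proof. by apply/eqP/and3P => [[-> -> ->]|[/eqP-> /eqP-> /eqP->]]. Qed.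

Lemma branching_antisym g o (t : Tri) (u v : 'I_3) :
  is_branching g o -> u != v -> o (t, v, u) = ~~ o (t, u, v).
Proof.
move=> [ob _] uv; have [r [ri hr]] := ob t.
rewrite (hr _ _ uv) (hr v u); last by rewrite eq_sym.
have ne : r v != r u by apply: contra uv => /eqP/ri->.
by rewrite ltn_neqAle ne leqNgt.
Qed.

Lemma ambiguous_apex g o (d : dart Tri) (t : Tri) (a b c : 'I_3) :
  is_branching g o -> ambiguous g o d -> a != b -> c != a -> c != b ->
  in_edge g d (t, a, b) -> ~~ in_edge g d (t, c, a) -> ~~ in_edge g d (t, c, b) ->
  o (t, c, b) = o (t, c, a).
Proof.
move=> [ob _] [amb _] ab ca cb eab nca ncb.
have [r [ri hr]] := ob t; have [r' [ri' hr']] := amb t.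
move: (hr' c a ca) (hr' c b cb) (hr' a b ab).
rewrite /reverse_at eab (negbTE nca) (negbTE ncb) !hr // => hca hcb hab.
by apply: (orders_differing_on_pair ri ri') => //; rewrite -hab negbK.
Qed.

Lemma iso_ext g g' o : (forall x, is_side x -> g' x = g x) -> br_iso g o g' o.
Proof.
move=> eq_g; exists 1%g, (fun _ => 1%g) => /= -[[t u] v] sx.
rewrite !perm1 /dtri /dsrc /dtgt /= eq_g //.
by split=> //; case: (g _) => [[]].
Qed.

Lemma branching_ext g g' o :
  (forall x, is_side x -> g' x = g x) -> is_branching g o -> is_branching g' o.
Proof. by move=> eq_g [o_tri o_glue]; split=> // x sx; rewrite eq_g // o_glue. Qed.

End Branchings.

Section Quadrilateral.
Variable Tri : finType.
Variable g : gluing Tri.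
Variables (t1 t2 : Tri) (a1 b1 a2 b2 : 'I_3).
Hypothesis g_tri : is_triangulation g.
Hypothesis ab1 : a1 != b1.
Hypothesis t21 : t2 != t1.
Hypothesis g_e : g (t1, a1, b1) = (t2, a2, b2).

Local Notation e := (t1, a1, b1).
Local Notation c1 := (third a1 b1).
Local Notation c2 := (third a2 b2).
Local Notation phi := (flip_phi g e).
Local Notation phiinv := (flip_phiinv g e).
Local Notation g1 := (flip g e).

Lemma ab2 : a2 != b2.
Proof. by have [] := g_tri (x := e) ab1; rewrite g_e. Qed.

Lemma g_e_rev : g (t1, b1, a1) = (t2, b2, a2).
Proof. by have [_ _ grev _ _] := g_tri (x := e) ab1; rewrite g_e in grev. Qed.

Lemma g_e' : g (t2, a2, b2) = (t1, a1, b1).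
Proof. by have [_ gg _ _ _] := g_tri (x := e) ab1; rewrite g_e in gg. Qed.

Lemma g_e'_rev : g (t2, b2, a2) = (t1, b1, a1).
Proof.
by have [_ _ grev _ _] := g_tri (x := (t2, a2, b2)) ab2; rewrite g_e' in grev.
Qed.

Lemma quad_neqE :
  ((t1 == t2) = false) * ((t2 == t1) = false) *
  ((a1 == b1) = false) * ((b1 == a1) = false) *
  ((c1 == a1) = false) * ((a1 == c1) = false) *
  ((c1 == b1) = false) * ((b1 == c1) = false) *
  ((a2 == b2) = false) * ((b2 == a2) = false) *
  ((c2 == a2) = false) * ((a2 == c2) = false) *
  ((c2 == b2) = false) * ((b2 == c2) = false).
Proof.
have [/andP[ca1 cb1] /andP[ca2 cb2]] := (third_neq a1 b1, third_neq a2 b2).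
by rewrite !(eq_sym _ c1) !(eq_sym _ c2) (eq_sym b1) (eq_sym b2) (eq_sym t1)
   (negbTE ab1) (negbTE ab2) (negbTE t21) (negbTE ca1) (negbTE cb1)
   (negbTE ca2) (negbTE cb2).
Qed.

Lemma in_edgeE y : in_edge g e y =
  [|| y == (t1, a1, b1), y == (t1, b1, a1), y == (t2, a2, b2) | y == (t2, b2, a2)].
Proof. by rewrite /in_edge g_e. Qed.

Definition new_diag (y : dart Tri) : bool :=
  [|| y == (t1, c1, b1), y == (t1, b1, c1), y == (t2, a2, c2) | y == (t2, c2, a2)].

Lemma flip_phiE y : phi y =
  if y == (t1, c1, b1) then (t2, a2, b2) else if y == (t1, b1, c1) then (t2, b2, a2)
  else if y == (t2, c2, a2) then (t1, b1, a1) else if y == (t2, a2, c2) then (t1, a1, b1)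
  else y.
Proof. by rewrite /flip_phi g_e. Qed.

Lemma flip_phiinvE y : phiinv y =
  if y == (t2, a2, b2) then (t1, c1, b1) else if y == (t2, b2, a2) then (t1, b1, c1)
  else if y == (t1, b1, a1) then (t2, c2, a2) else if y == (t1, a1, b1) then (t2, a2, c2)
  else y.
Proof. by rewrite /flip_phiinv g_e. Qed.

Lemma flipE y : g1 y =
  if y == (t1, c1, b1) then (t2, a2, c2) else if y == (t1, b1, c1) then (t2, c2, a2)
  else if y == (t2, a2, c2) then (t1, c1, b1) else if y == (t2, c2, a2) then (t1, b1, c1)
  else phi (g (phiinv y)).
Proof. by rewrite /flip g_e. Qed.

Ltac quad_simpl :=
  repeat first [ rewrite dart_eqE | rewrite eqxx | rewrite quad_neqE
               | match goal with H : (_ == _) = false |- _ => rewrite H end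
               | progress simpl ].

Lemma quad_dart_ind (P : dart Tri -> Prop) :
  (forall u v, P (t1, u, v)) -> (forall u v, P (t2, u, v)) ->
  (forall t u v, t != t1 -> t != t2 -> P (t, u, v)) -> forall y, P y.
Proof.
move=> P1 P2 P3 [[t u] v].
by have [->|nt1] := eqVneq t t1; [|have [->|nt2] := eqVneq t t2]; auto.
Qed.

Ltac quad_cases y :=
  let u := fresh "u" in let v := fresh "v" in
  elim/quad_dart_ind: y => [u v|u v|? ? ? /negbTE ? /negbTE ?];
  [ elim/(ord3_ind ab1): u; elim/(ord3_ind ab1): v
  | elim/(ord3_ind ab2): u; elim/(ord3_ind ab2): v | ].

Lemma phiinv_phi y : ~~ in_edge g e y -> phiinv (phi y) = y.
Proof. by quad_cases y; rewrite in_edgeE flip_phiE flip_phiinvE; quad_simpl. Qed.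

Lemma phiinv_off_edge y : ~~ in_edge g e (phiinv y).
Proof. by quad_cases y; rewrite in_edgeE flip_phiinvE; quad_simpl. Qed.

Lemma phi_off_diag y : ~~ new_diag (phi y).
Proof. by quad_cases y; rewrite /new_diag flip_phiE; quad_simpl. Qed.

Lemma phiinv_side y : is_side y -> is_side (phiinv y).
Proof. by quad_cases y; rewrite /is_side flip_phiinvE; quad_simpl. Qed.

Lemma g_off_edge y : is_side y -> ~~ in_edge g e y -> ~~ in_edge g e (g y).
Proof.
move=> sy; have [_ ggy _ _ _] := g_tri sy.
by apply: contra; rewrite in_edgeE => /or4P[] /eqP gy; rewrite -ggy gy in_edgeE
  ?g_e ?g_e_rev ?g_e' ?g_e'_rev eqxx ?orbT.
Qed.

Lemma flip_diag : g1 (t1, c1, b1) = (t2, a2, c2).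
Proof. by rewrite flipE eqxx. Qed.

Lemma flip_back_phiE x : flip_phi g1 (t1, c1, b1) x = phiinv x.
Proof.
by quad_cases x; rewrite /flip_phi flip_diag /= (third_third_l ab1)
  (third_third_r ab2) flip_phiinvE; quad_simpl.
Qed.

Lemma flip_back_phiinvE x : flip_phiinv g1 (t1, c1, b1) x = phi x.
Proof.
by quad_cases x; rewrite /flip_phiinv flip_diag /= (third_third_l ab1)
  (third_third_r ab2) flip_phiE; quad_simpl.
Qed.

Lemma flip_back x : is_side x -> flip g1 (t1, c1, b1) x = g x.
Proof.
move=> sx; rewrite {1}/flip flip_diag /= (third_third_l ab1) (third_third_r ab2).
rewrite flip_back_phiE flip_back_phiinvE.
have [on_e|off_e] := boolP (in_edge g e x).
  by move: on_e; rewrite in_edgeE => /or4P[] /eqP->; quad_simpl;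
     rewrite ?g_e ?g_e_rev ?g_e' ?g_e'_rev.
move: (off_e); rewrite in_edgeE.
move=> /norP[/negbTE-> /norP[/negbTE-> /norP[/negbTE-> /negbTE->]]].
have := phi_off_diag x; rewrite flipE /new_diag.
move=> /norP[/negbTE-> /norP[/negbTE-> /norP[/negbTE-> /negbTE->]]].
by rewrite phiinv_phi // phiinv_phi // g_off_edge.
Qed.

Variable o : dart Tri -> bool.
Hypothesis o_br : is_branching g o.
Hypothesis o_amb : ambiguous g o e.

Lemma apex1 : o (t1, c1, b1) = o (t1, c1, a1).
Proof.
have /andP[ca cb] := third_neq a1 b1.
by apply: (ambiguous_apex o_br o_amb ab1) => //; rewrite in_edgeE; quad_simpl.
Qed.

Lemma apex2 : o (t2, c2, b2) = o (t2, c2, a2).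
Proof.
have /andP[ca cb] := third_neq a2 b2.
by apply: (ambiguous_apex o_br o_amb ab2) => //; rewrite in_edgeE; quad_simpl.
Qed.

(* The orientation of the flipped triangulation: the old sides keep their
   orientation, and the new diagonal goes from c1 to c2 exactly when c1 is a
   source of t1 and c2 a sink of t2. *)
Definition diag_c1c2 : bool := o (t1, c1, a1) && o (t2, a2, c2).

Definition flip_orient (y : dart Tri) : bool :=
  if new_diag y then
    if (y == (t1, c1, b1)) || (y == (t2, a2, c2)) then diag_c1c2 else ~~ diag_c1c2
  else o (phiinv y).

Lemma flip_orient_off_diag y : ~~ new_diag y -> flip_orient y = o (phiinv y).
Proof. by rewrite /flip_orient => /negbTE->. Qed.

Lemma o_antisym (t : Tri) (u v : 'I_3) : u != v -> o (t, v, u) = ~~ o (t, u, v).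
Proof. exact: (@branching_antisym Tri g o t u v o_br). Qed.

Lemma o_quadE :
  (o (t1, a1, c1) = ~~ o (t1, c1, a1)) * (o (t1, b1, c1) = ~~ o (t1, c1, a1)) *
  (o (t1, c1, b1) = o (t1, c1, a1)) * (o (t2, c2, a2) = ~~ o (t2, a2, c2)) *
  (o (t2, c2, b2) = ~~ o (t2, a2, c2)) * (o (t2, b2, c2) = o (t2, a2, c2)).
Proof.
have /andP[ca1 cb1] := third_neq a1 b1; have /andP[ca2 cb2] := third_neq a2 b2.
have ac2 : a2 != c2 by rewrite eq_sym.
by rewrite (o_antisym _ ca1) (o_antisym _ cb1) apex1 (o_antisym _ cb2) apex2
   (o_antisym _ ac2) negbK.
Qed.

(* Both new triangles are consistently ordered: c1, c2 being extremal, the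
   new diagonal can be inserted without creating a cyclic face. *)
Lemma flip_orient_tri (t : Tri) : exists r : 'I_3 -> nat,
  injective r /\ forall u v, u != v -> flip_orient (t, u, v) = (r u < r v).
Proof.
have /andP[ca1 cb1] := third_neq a1 b1; have /andP[ca2 cb2] := third_neq a2 b2.
have [->|/negbTE nt1] := eqVneq t t1.
  apply: (acyclic_tri_order (f := fun u v => flip_orient (t1, u, v)) (c := c1) ab1);
  rewrite 1?eq_sym //= /flip_orient /new_diag ?flip_phiinvE; quad_simpl;
  by rewrite ?o_quadE /diag_c1c2; case: (o (t1, c1, a1)); case: (o (t2, a2, c2)).
have [->|/negbTE nt2] := eqVneq t t2.
  apply: (acyclic_tri_order (f := fun u v => flip_orient (t2, u, v)) (c := c2) ab2);
  rewrite 1?eq_sym //= /flip_orient /new_diag ?flip_phiinvE; quad_simpl;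
  by rewrite ?o_quadE /diag_c1c2; case: (o (t1, c1, a1)); case: (o (t2, a2, c2)).
have [r [ri hr]] := o_br.1 t; exists r; split=> // u v uv.
by rewrite /flip_orient /new_diag flip_phiinvE; quad_simpl; exact: hr.
Qed.

(* The orientation is compatible with the new gluing: on the new diagonal by
   construction, elsewhere because g1 is g transported by phi. *)
Lemma flip_orient_glue x : is_side x -> flip_orient (g1 x) = flip_orient x.
Proof.
move=> sx; have [on_diag|off_diag] := boolP (new_diag x).
  by move: on_diag; rewrite /new_diag => /or4P[] /eqP->;
     rewrite flipE /flip_orient /new_diag; quad_simpl.
rewrite (flip_orient_off_diag off_diag) flipE.
move: off_diag; rewrite /new_diag.
move=> /norP[/negbTE-> /norP[/negbTE-> /norP[/negbTE-> /negbTE->]]].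
rewrite flip_orient_off_diag ?phi_off_diag // phiinv_phi.
  by rewrite (proj2 o_br) ?phiinv_side.
by rewrite g_off_edge ?phiinv_side ?phiinv_off_edge.
Qed.

Lemma flip_orient_branching : is_branching g1 flip_orient.
Proof. by split; [exact: flip_orient_tri | exact: flip_orient_glue]. Qed.

Lemma first_bflip : bflip g o g1 flip_orient.
Proof.
exists e; split=> //; first by rewrite /trapped g_e.
exists flip_orient; split; [exact: flip_orient_branching | | exact: iso_ext].
by move=> x _ off_e; rewrite flip_orient_off_diag ?phi_off_diag // phiinv_phi.
Qed.

Lemma second_bflip : bflip g1 flip_orient g (reverse_at g e o).
Proof.
have /andP[_ cb1] := third_neq a1 b1.
exists (t1, c1, b1); split=> //; first by rewrite /trapped flip_diag.
exists (reverse_at g e o); split.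
- exact: branching_ext flip_back o_amb.
- move=> x _; rewrite /in_edge flip_diag -/(new_diag x) => off_diag.
  rewrite flip_back_phiE /reverse_at (negbTE (phiinv_off_edge x)).
  by rewrite flip_orient_off_diag.
- by apply: iso_ext => x sx; rewrite flip_back.
Qed.

End Quadrilateral.

Theorem lemma2p4 (Tri : finType) (g : gluing Tri) (o : dart Tri -> bool)
    (d : dart Tri) :
  is_triangulation g ->
  tri_connected g ->
  (euler_char g - (n_vertices g)%:Z < 0)%R ->
  is_branching g o ->
  is_side d ->
  ambiguous g o d ->
  ~~ trapped g d ->
  exists (g1 : gluing Tri) (o1 : dart Tri -> bool),
    bflip g o g1 o1 /\ bflip g1 o1 g (reverse_at g d o).
Proof.
move: d => [[t1 a1] b1] g_tri _ _ o_br ab1 o_amb untrapped.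
case g_e: (g (t1, a1, b1)) => [[t2 a2] b2].
have t21 : t2 != t1 by move: untrapped; rewrite /trapped g_e.
exists (flip g (t1, a1, b1)), (flip_orient g t1 t2 a1 b1 a2 b2 o).
by split; [apply: first_bflip | apply: second_bflip].
Qed.
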